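(* Let $\mathscr H$ be a complex Hilbert space and $\mathbf{T}=(T_1,\dots,T_d)\in\mathbb{B}(\mathscr H)^d$. Then $$\frac{1}{d}\,w_e(\mathbf{T}^2)\le w_e^2(\mathbf{T}).$$
   Context: $\mathbb{B}(\mathscr H)$ denotes the bounded linear operators on $\mathscr H$. For a $d$-tuple $\mathbf{T}=(T_1,\dots,T_d)\in\mathbb{B}(\mathscr H)^d$, the Euclidean operator radius is $w_e(\mathbf{T})=\sup\{(\sum_{k=1}^d|\langle T_kx,x\rangle|^2)^{1/2}: x\in\mathscr H,\ \|x\|=1\}$. Powers are componentwise: $\mathbf{T}^n=(T_1^n,\dots,T_d^n)$. *)

From HB Require Import structures.
From mathcomp Require Import all_boot all_order all_algebra.
From mathcomp Require Import complex.
From mathcomp Require Import all_classical all_reals.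
Set Implicit Arguments. Unset Strict Implicit. Unset Printing Implicit Defensive.
Import Order.TTheory GRing.Theory Num.Theory.
Local Open Scope ring_scope.
Local Open Scope classical_set_scope.

Section Hilbert.
Variable R : realType.
Variable V : lmodType R[i].
Variable ip : V -> V -> R[i].

Definition is_inner_product : Prop :=
  [/\ (forall (a : R[i]) (x y z : V), ip (a *: x + y) z = a * ip x z + ip y z),
      (forall x y : V, ip y x = conjc (ip x y)),
      (forall x : V, 0 <= ip x x) &
      (forall x : V, ip x x = 0 -> x = 0)].

Definition ipnorm (x : V) : R := Num.sqrt (complex.Re (ip x x)).

Definition ip_complete : Prop :=
  forall u : nat -> V,
    (forall e : R, 0 < e -> exists N : nat, forall m n : nat,
        (N <= m)%N -> (N <= n)%N -> ipnorm (u m - u n) < e) ->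
    exists l : V, forall e : R, 0 < e -> exists N : nat, forall n : nat,
        (N <= n)%N -> ipnorm (u n - l) < e.

Definition is_Hilbert : Prop := is_inner_product /\ ip_complete.

Definition bounded_op (A : V -> V) : Prop :=
  exists M : R, forall x : V, ipnorm (A x) <= M * ipnorm x.

End Hilbert.

Definition cabs2 (R : realType) (z : R[i]) : R := complex.Re z ^+ 2 + complex.Im z ^+ 2.

Definition euclid_radius (R : realType) (V : lmodType R[i]) (ip : V -> V -> R[i])
    (d : nat) (T : 'I_d -> V -> V) : R :=
  sup [set r : R | exists x : V, ipnorm ip x = 1 /\
         r = Num.sqrt (\sum_(k < d) cabs2 (ip (T k x) x))].

Definition tuple_sq (V : Type) (d : nat) (T : 'I_d -> V -> V) : 'I_d -> V -> V :=
  fun k x => T k (T k x).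

(* Write W := w_e(T).  Every component has numerical radius at most W, since
   |<T_k x, x>|^2 is one summand of the sum whose square root is bounded by W.
   The power inequality w(A^2) <= w(A)^2 for a single operator then bounds
   every component of T^2 by W^2, hence w_e(T^2) <= sqrt d * W^2 <= d * W^2. *)

From HB Require Import structures.
From mathcomp Require Import all_boot all_order all_algebra.
From mathcomp Require Import complex.
From mathcomp Require Import all_classical all_reals.
From mathcomp Require Import ring lra.
Import Order.TTheory GRing.Theory Num.Theory.
Local Open Scope ring_scope.
Local Open Scope complex_scope.
Set Implicit Arguments.
Unset Strict Implicit.

Notation RE := complex.Re.
Notation IM := complex.Im.

Section ComplexFacts.
Variable R : realType.
Implicit Types (z c w : R[i]) (k B : R).

Lemma ReM z w : RE (z * w) = RE z * RE w - IM z * IM w.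
Proof. by case: z => a b; case: w => c d; simpc. Qed.

Lemma ImM z w : IM (z * w) = RE z * IM w + IM z * RE w.
Proof. by case: z => a b; case: w => c d; simpc. Qed.

Lemma Re_realM k w : RE (k%:C * w) = k * RE w.
Proof. by rewrite ReM /= mul0r subr0. Qed.

Lemma Re_conjc z : RE (conjc z) = RE z.
Proof. by case: z. Qed.

Lemma cabs2_ge0 z : 0 <= cabs2 z.
Proof. rewrite /cabs2; nra. Qed.

Lemma cabs2M z w : cabs2 (z * w) = cabs2 z * cabs2 w.
Proof. rewrite /cabs2 ReM ImM; ring. Qed.

Lemma cabs2N z : cabs2 (- z) = cabs2 z.
Proof. by case: z => a b; rewrite /cabs2 /= !sqrrN. Qed.

Lemma cabs21 : cabs2 (1 : R[i]) = 1.
Proof. by rewrite /cabs2 /= expr0n /= addr0 expr1n. Qed.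

Lemma conjc_mul_self c : conjc c * c = (cabs2 c)%:C.
Proof. by case: c => a b; rewrite /cabs2 /=; simpc; rewrite -!expr2 (mulrC b a) subrr. Qed.

Lemma Re_le_of_cabs2 z B : 0 <= B -> cabs2 z <= B ^+ 2 -> RE z <= B.
Proof. rewrite /cabs2 => hB h; nra. Qed.

(* Conversely |z| <= B if every rotation c z has real part at most B;
   the rotation c = conj z / |z| realises |z|. *)
Lemma cabs2_le_of_Re_rot z B :
  (forall c, cabs2 c = 1 -> RE (c * z) <= B) -> cabs2 z <= B ^+ 2.
Proof.
move=> H.
have h1 := H 1 cabs21; have h2 := H (-1) ltac:(by rewrite cabs2N cabs21).
rewrite mul1r in h1; rewrite mulN1r in h2.
case: z H h1 h2 => a b H /= h1 h2; rewrite /cabs2 /=.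
set s := Num.sqrt (a ^+ 2 + b ^+ 2).
have hs2 : s ^+ 2 = a ^+ 2 + b ^+ 2 by rewrite sqr_sqrtr //; nra.
have [s0|sn0] := eqVneq s 0; first by rewrite -hs2 s0 expr0n sqr_ge0.
have unit_rot : cabs2 (Complex (a / s) (- b / s)) = 1.
  by rewrite /cabs2 /= !expr_div_n sqrrN -mulrDl -hs2 divff // expf_neq0.
have := H _ unit_rot; rewrite /=.
have -> : a / s * a - - b / s * b = s.
  by apply: (mulIf sn0); rewrite -expr2 hs2; field.
by move=> sB; rewrite -hs2 lerXn2r ?nnegrE ?sqrtr_ge0 //; apply: le_trans sB; apply: sqrtr_ge0.
Qed.

(* Every unimodular number is a unimodular square, so unimodular squares
   suffice as rotations. *)
Lemma cabs2_le_of_Re_rot2 z B :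
  (forall c, cabs2 c = 1 -> RE (c ^+ 2 * z) <= B) -> cabs2 z <= B ^+ 2.
Proof.
move=> H; apply: cabs2_le_of_Re_rot => u hu.
rewrite -(sqr_sqrtc u); apply: H.
have e : cabs2 (sqrtc u) ^+ 2 = 1 by rewrite expr2 -cabs2M -expr2 sqr_sqrtc.
have := cabs2_ge0 (sqrtc u); move: e; set t := cabs2 _ => e g; nra.
Qed.

Lemma le_sqr_of_forall_gt (a W : R) :
  0 <= W -> (forall e, 0 < e -> a <= (W + e) ^+ 2) -> a <= W ^+ 2.
Proof.
move=> W0 H; apply/ler_addgt0Pr => del hdel.
set D := 2 * W + 1 + del.
have D0 : 0 < D by rewrite /D; lra.
have e0 : 0 < del / D by rewrite divr_gt0.
have eD : del / D * D = del by rewrite divfK // lt0r_neq0.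
apply: le_trans (H _ e0) _; move: eD; set e := del / D => eD.
have e1 : e <= 1 by rewrite /D in eD; nra.
rewrite /D in eD; nra.
Qed.

End ComplexFacts.

Section InnerProduct.
Variables (R : realType) (V : lmodType R[i]) (ip : V -> V -> R[i]).
Hypothesis Hip : is_inner_product ip.

Lemma ipL a x y z : ip (a *: x + y) z = a * ip x z + ip y z.
Proof. by case: Hip. Qed.

Lemma ipC x y : ip y x = conjc (ip x y).
Proof. by case: Hip. Qed.

Lemma ip_eq0 x : ip x x = 0 -> x = 0.
Proof. by case: Hip => _ _ _; apply. Qed.

Lemma ip0l z : ip 0 z = 0.
Proof.
have := ipL 1 0 0 z; rewrite scaler0 addr0 mul1r => /esym/eqP.
by rewrite -subr_eq0 addrK => /eqP.
Qed.

Lemma ipDl x y z : ip (x + y) z = ip x z + ip y z.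
Proof. by have := ipL 1 x y z; rewrite scale1r mul1r. Qed.

Lemma ipZl a x z : ip (a *: x) z = a * ip x z.
Proof. by rewrite -[a *: x]addr0 ipL ip0l addr0. Qed.

Lemma ipBl x y z : ip (x - y) z = ip x z - ip y z.
Proof. by rewrite ipDl -scaleN1r ipZl mulN1r. Qed.

Lemma ipDr x y z : ip z (x + y) = ip z x + ip z y.
Proof. by rewrite ipC ipDl rmorphD /= -!ipC. Qed.

Lemma ipZr a x z : ip z (a *: x) = conjc a * ip z x.
Proof. by rewrite ipC ipZl rmorphM /= -ipC. Qed.

Lemma ipBr x y z : ip z (x - y) = ip z x - ip z y.
Proof. by rewrite ipC ipBl rmorphB /= -!ipC. Qed.

Lemma ip_real x : ip x x = (RE (ip x x))%:C.
Proof.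
have : 0 <= ip x x by case: Hip.
by rewrite lecE /=; case: (ip x x) => a b /andP [/eqP /= -> _].
Qed.

Lemma Re_ip_ge0 x : 0 <= RE (ip x x).
Proof. have : 0 <= ip x x by case: Hip. by rewrite lecE => /andP []. Qed.

Lemma ip_unit x : ipnorm ip x = 1 -> ip x x = 1.
Proof.
rewrite /ipnorm ip_real => h.
by rewrite -(sqr_sqrtr (Re_ip_ge0 x)) h expr1n.
Qed.

(* 2 |<a, b>| <= ||a||^2 + ||b||^2, from 0 <= ||a - conj c b||^2. *)
Lemma cabs2_ip_le a b :
  cabs2 (ip a b) <= ((RE (ip a a) + RE (ip b b)) / 2) ^+ 2.
Proof.
apply: cabs2_le_of_Re_rot => c hc.
have := Re_ip_ge0 (a - conjc c *: b).
rewrite !ipBl !ipBr !ipZl !ipZr conjcK (ipC b a) mulrA conjc_mul_self hc mul1r.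
rewrite !raddfB /= -(Re_conjc (conjc c * _)) rmorphM /= conjcK; lra.
Qed.

(* The numerical-radius bound w(A) <= W, in squared form. *)
Definition numrad_le (A : V -> V) (W : R) : Prop :=
  forall x, ipnorm ip x = 1 -> cabs2 (ip (A x) x) <= W ^+ 2.

Lemma numrad_le_bounded (A : V -> V) (M : R) :
  (forall x, ipnorm ip (A x) <= M * ipnorm ip x) -> numrad_le A ((M ^+ 2 + 1) / 2).
Proof.
move=> HM x hx; apply: le_trans (cabs2_ip_le (A x) x) _.
have hA : ipnorm ip (A x) <= M by rewrite -[M]mulr1 -hx HM.
have n0 : 0 <= ipnorm ip (A x) by rewrite sqrtr_ge0.
have e : RE (ip (A x) (A x)) = ipnorm ip (A x) ^+ 2 by rewrite sqr_sqrtr ?Re_ip_ge0.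
rewrite (ip_unit hx) e /=.
have sq : ipnorm ip (A x) ^+ 2 <= M ^+ 2 by rewrite lerXn2r ?nnegrE //; apply: le_trans hA.
rewrite lerXn2r ?nnegrE //; try lra; apply: divr_ge0 => //; nra.
Qed.

Lemma numrad_le_mono (A : V -> V) (W W' : R) :
  0 <= W -> W <= W' -> numrad_le A W -> numrad_le A W'.
Proof.
move=> W0 WW' H x hx; apply: le_trans (H x hx) _.
by rewrite lerXn2r ?nnegrE //; apply: le_trans WW'.
Qed.

Section LinearOperator.
Variable T : {linear V -> V}.

(* Homogeneous form of w(T) <= W: Re (c <T u, u>) <= W <u, u> for |c| = 1;
   it follows by normalising u. *)
Lemma numrad_le_Re (W : R) : 0 <= W -> numrad_le T W ->
  forall u c, cabs2 c = 1 -> RE (c * ip (T u) u) <= W * RE (ip u u).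
Proof.
move=> W0 HW u c hc.
have p0 := Re_ip_ge0 u; set p := RE (ip u u) in p0 *.
have [pz|pnz] := eqVneq p 0.
  have -> : u = 0 by apply: ip_eq0; rewrite ip_real -/p pz.
  by rewrite linear0 ip0l mulr0 pz mulr0.
have n0 : 0 < Num.sqrt p by rewrite sqrtr_gt0 lt_def pnz.
set k := (Num.sqrt p)^-1.
have kkp : k * k * p = 1 by rewrite /k -{3}(sqr_sqrtr p0) expr2; field; exact: lt0r_neq0.
have hv : ipnorm ip (k%:C *: u) = 1.
  by rewrite /ipnorm ipZl ipZr conjc_real ip_real -/p mulrA -!rmorphM kkp sqrtr1.
have := HW _ hv; rewrite linearZ /= ipZl ipZr conjc_real mulrA -rmorphM /= => hk.
have hck : cabs2 (c * ((k * k)%:C * ip (T u) u)) <= W ^+ 2 by rewrite cabs2M hc mul1r.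
have := Re_le_of_cabs2 W0 hck; rewrite mulrCA Re_realM => h.
rewrite -[RE _]mul1r -kkp (mulrC W); move: h; set a := RE _ => h.
have -> : k * k * p * a = p * (k * k * a) by ring.
exact: ler_wpM2l.
Qed.

(* With y+- :=
   W x +- c T x one has W y+ - c T y+ = W y- + c T y- = W^2 x - c^2 T^2 x,
   and both real parts of the inner products against y+- are nonnegative;
   summing gives Re (2W <W^2 x - c^2 T^2 x, x>) >= 0. *)
Lemma numrad_le_sqr (W : R) : 0 < W -> numrad_le T W ->
  numrad_le (fun x => T (T x)) (W ^+ 2).
Proof.
move=> W0 HW x hx.
have H := numrad_le_Re (ltW W0) HW.
apply: cabs2_le_of_Re_rot2 => c hc.
set w : R[i] := W%:C.
set yp := w *: x + c *: T x; set ym := w *: x - c *: T x.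
set Q := (w * w) *: x - c ^+ 2 *: T (T x).
(* linearity of T, stated for T alone: the generic rewrite rules would also
   act on the (linear) scaling maps in these expressions *)
have TD u v : T (u + v) = T u + T v by apply: linearD.
have TB u v : T (u - v) = T u - T v by apply: linearB.
have TZ a u : T (a *: u) = a *: T u by apply: linearZ.
have eP : w *: yp - c *: T yp = Q.
  rewrite /yp /Q TD !TZ !scalerDr !scalerA opprD addrA.
  by rewrite (mulrC w c) addrK expr2.
have eM : w *: ym + c *: T ym = Q.
  rewrite /ym /Q TB !TZ /= !scalerBr !scalerA addrA.
  by rewrite (mulrC w c) subrK expr2.
have eS : yp + ym = (w + w) *: x by rewrite /yp /ym addrACA subrr addr0 scalerDl.
have hP : 0 <= RE (ip Q yp).
  by rewrite -eP ipBl !ipZl raddfB /= Re_realM subr_ge0; exact: H.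
have hM : 0 <= RE (ip Q ym).
  rewrite -eM ipDl !ipZl raddfD /= Re_realM.
  have := H ym (- c); rewrite cabs2N mulNr raddfN /= => /(_ hc); lra.
have : 0 <= RE (ip Q (yp + ym)) by rewrite ipDr raddfD /=; apply: addr_ge0.
rewrite eS ipZr /Q ipBl !ipZl (ip_unit hx) mulr1.
rewrite /w -rmorphD conjc_real -rmorphM Re_realM raddfB /=.
set a := RE _ => h.
have : 0 <= W * W - a by rewrite -(pmulr_rge0 _ (addr_gt0 W0 W0)).
rewrite expr2; lra.
Qed.

End LinearOperator.

Section EuclideanRadius.
Variables (d : nat) (T : 'I_d -> V -> V).

Let values := [set r : R | exists x : V, ipnorm ip x = 1 /\
                 r = Num.sqrt (\sum_(k < d) cabs2 (ip (T k x) x))]%classic.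

Lemma euclid_radius_ge0 : 0 <= euclid_radius ip T.
Proof.
rewrite /euclid_radius -/values.
have [[[r vr] ub]|nosup] := pselect (has_sup values); last by rewrite sup_out.
apply: le_trans (ub_le_sup ub vr).
by case: vr => x [_ ->]; apply: sqrtr_ge0.
Qed.

(* If every component has a bounded numerical range, the supremum defining
   w_e(T) is finite and dominates the numerical radius of each component. *)
Lemma numrad_le_euclid_radius :
  (forall k, exists B, numrad_le (T k) B) ->
  forall k, numrad_le (T k) (euclid_radius ip T).
Proof.
move=> /choice [B HB] k x hx.
set S := \sum_(j < d) cabs2 (ip (T j x) x).
have S0 : 0 <= S by apply: sumr_ge0 => j _; apply: cabs2_ge0.
have ub : has_ubound values.
  exists (Num.sqrt (\sum_(j < d) B j ^+ 2)) => _ [y [hy ->]].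
  by rewrite ler_sqrt ?sumr_ge0 // => [|j _]; [apply: ler_sum => j _; apply: HB | apply: sqr_ge0].
have hS : Num.sqrt S <= euclid_radius ip T by apply: ub_le_sup => //; exists x.
apply: le_trans (_ : S <= _).
  by rewrite /S (bigD1 k) //= lerDl; apply: sumr_ge0 => j _; apply: cabs2_ge0.
by rewrite -(sqr_sqrtr S0) lerXn2r ?nnegrE ?sqrtr_ge0 ?euclid_radius_ge0.
Qed.

Lemma euclid_radius_le (B : R) : 0 <= B ->
  (forall k, numrad_le (T k) B) -> euclid_radius ip T <= Num.sqrt d%:R * B.
Proof.
move=> B0 HB; rewrite /euclid_radius -/values.
have [ne|empty] := pselect (values !=set0)%classic; last by rewrite sup_out ?mulr_ge0 ?sqrtr_ge0 // => -[].
apply: ge_sup => // _ [x [hx ->]].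
rewrite -(ger0_norm B0) -sqrtr_sqr -sqrtrM ?ler0n // ler_sqrt ?mulr_ge0 ?ler0n ?sqr_ge0 //.
apply: le_trans (_ : \sum_(k < d) B ^+ 2 <= _); first by apply: ler_sum => k _; apply: HB.
by rewrite sumr_const card_ord mulr_natl.
Qed.

End EuclideanRadius.
End InnerProduct.

Theorem corollary2p3 (R : realType) (V : lmodType R[i]) (ip : V -> V -> R[i])
    (HV : is_Hilbert ip) (d : nat) (T : 'I_d -> {linear V -> V})
    (HT : forall k : 'I_d, bounded_op ip (T k)) :
  (d%:R)^-1 * euclid_radius ip (tuple_sq (fun k => (T k : V -> V)))
    <= (euclid_radius ip (fun k => (T k : V -> V))) ^+ 2.
Proof.
have [Hip _] := HV.
have [d0|dpos] := posnP d.
  by rewrite (_ : d%:R = 0) ?d0 // invr0 mul0r sqr_ge0.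
set T1 := fun k => (T k : V -> V).
set W := euclid_radius ip T1.
have W0 : 0 <= W by apply: euclid_radius_ge0.
have HW : forall k, numrad_le ip (T1 k) W.
  apply: numrad_le_euclid_radius => k.
  have [M HM] := HT k; exists ((M ^+ 2 + 1) / 2); exact: (numrad_le_bounded Hip).
apply: le_sqr_of_forall_gt => // e e0.
have We : 0 < W + e by rewrite ltr_wpDl.
have HW2 k : numrad_le ip (tuple_sq T1 k) ((W + e) ^+ 2).
  apply: (numrad_le_sqr Hip) => //.
  by apply: numrad_le_mono (HW k) => //; rewrite lerDl ltW.
have := euclid_radius_le (sqr_ge0 (W + e)) HW2.
have sqrt_d : Num.sqrt d%:R <= d%:R :> R.
  have d1 : 1 <= d%:R :> R by rewrite ler1n.
  have := sqr_sqrtr (ler0n R d); have := sqrtr_ge0 (d%:R : R); nra.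
move=> /le_trans /(_ (ler_wpM2r (sqr_ge0 _) sqrt_d)).
by rewrite -ler_pdivrMl ?ltr0n.
Qed.
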